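(* $$\sum _{n=0}^{\infty } \left( \frac{1}{16} \right)^{n} \binom{2 n}{n}^2 \frac{ H_n^{(2)}}{n + 1} = \frac{32 G}{\pi }+\frac{2 \pi }{3}-16 \ln (2).$$
   Context: $H_n^{(2)} = \sum_{j=1}^n \frac{1}{j^2}$ (with $H_0^{(2)}=0$), and $G = \sum_{n\ge 0}\frac{(-1)^n}{(2n+1)^2}$ is Catalan's constant. *)

From Stdlib Require Import Reals.
From Coquelicot Require Import Coquelicot.
Open Scope R_scope.

Fixpoint H2 (n : nat) : R :=
  match n with
  | O => 0
  | S m => H2 m + / (INR (S m))^2
  end.

Definition catalan : R := Series (fun n => (-1)^n / (INR (2*n+1))^2).

Definition cbinom (n : nat) : R := Binomial.C (2*n) n.

From Stdlib Require Import Reals Lra Lia Nsatz Factorial.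
From Coquelicot Require Import Coquelicot.
Open Scope R_scope.

(* Write c_n = C(2n, n) / 4^n and b_n = c_n / n.  Since (n+1) c_(n+1)^2 - n c_n^2 = c_n^2 / (4 (n+1)),
   the partial sums telescope:
     sum_(n <= N) c_n^2 H_n / (n+1) = 4 (N+1) c_(N+1)^2 H_(N+1) - 4 sum_(k <= N+1) b_k c_k.
   By Wallis, n c_n^2 -> 1/pi, and H_n -> pi^2/6, so the first term tends to 2 pi / 3.
   For the second, sum_k b_k y^k = 4 ln 2 - 2 ln (2 + 2 sqrt (1 - y)); putting y = sin^2 x and
   integrating over [0, pi/2], where the integral of sin^(2k) is (pi/2) c_k, gives
   (pi/2) sum_k b_k c_k = 2 pi ln 2 - int_0^(pi/2) 2 ln (2 + 2 cos x) dx = 2 pi ln 2 - 4 G,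
   the last integral being computed from the Fourier series of ln (2 + 2 cos x). *)

Lemma is_lim_seq_inv_succ : is_lim_seq (fun n => / (INR n + 1)) 0.
Proof.
  apply (is_lim_seq_ext (fun n => / INR (S n))); [intros n; now rewrite S_INR|].
  apply (is_lim_seq_incr_1 (fun n => / INR n)).
  change (Finite 0) with (Rbar_inv p_infty).
  apply is_lim_seq_inv; [apply is_lim_seq_INR | discriminate].
Qed.

Lemma is_lim_seq_const_plus_inv_succ (l c : R) :
  is_lim_seq (fun n => l + c / (INR n + 1)) l.
Proof.
  assert (H := is_lim_seq_plus' _ _ _ _ (is_lim_seq_const l)
                 (is_lim_seq_scal_l _ c _ is_lim_seq_inv_succ)).
  rewrite Rmult_0_r, Rplus_0_r in H. exact H.
Qed.

Lemma nondecreasing_derive_nonneg (f df : R -> R) (a b : R) : a <= b ->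
  (forall x, a <= x <= b -> is_derive f x (df x)) ->
  (forall x, a <= x <= b -> 0 <= df x) -> f a <= f b.
Proof.
  intros Hab Hd Hp.
  destruct (MVT_gen f a b df) as [c [Hc E]];
    rewrite ?Rmin_left, ?Rmax_right in * by lra.
  - intros x Hx. apply Hd; lra.
  - intros x Hx. apply continuity_pt_filterlim, (@ex_derive_continuous R_AbsRing R_NormedModule).
    exists (df x). apply Hd; lra.
  - assert (0 <= df c * (b - a)) by (apply Rmult_le_pos; [apply Hp|]; lra). lra.
Qed.

Lemma derive_zero_const_unit_interval (h : R -> R) :
  (forall t, Rabs t < 1 -> is_derive h t 0) -> forall y, Rabs y < 1 -> h y = h 0.
Proof.
  intros Hd y Hy. apply Rabs_def2 in Hy.
  destruct (Rtotal_order y 0) as [Hlt|[->|Hgt]]; [|reflexivity|symmetry];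
    apply eq_is_derive; try lra; intros t Ht; apply Hd, Rabs_def1; lra.
Qed.

Lemma Rabs_diff_le_derive_bound (g dg h dh : R -> R) a b : a <= b ->
  (forall x, a <= x <= b -> is_derive g x (dg x)) ->
  (forall x, a <= x <= b -> is_derive h x (dh x)) ->
  (forall x, a <= x <= b -> Rabs (dg x) <= dh x) ->
  Rabs (g b - g a) <= h b - h a.
Proof.
  intros Hab Hg Hh Hb.
  assert (Hm := nondecreasing_derive_nonneg (fun x => h x - g x) (fun x => dh x - dg x) a b Hab).
  assert (Hp := nondecreasing_derive_nonneg (fun x => h x + g x) (fun x => dh x + dg x) a b Hab).
  apply Rabs_le. split; [enough (h a + g a <= h b + g b) by lra | enough (h a - g a <= h b - g b) by lra].
  - apply Hp; intros x Hx; [apply (@is_derive_plus R_AbsRing R_NormedModule); auto |].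
    specialize (Hb x Hx). apply Rabs_le_between in Hb. lra.
  - apply Hm; intros x Hx; [apply (@is_derive_minus R_AbsRing R_NormedModule); auto |].
    specialize (Hb x Hx). apply Rabs_le_between in Hb. lra.
Qed.

Lemma Rbar_lt_CV_radius_bounded (c : nat -> R) y :
  (forall n, Rabs (c n) <= 1) -> Rabs y < 1 -> Rbar_lt (Rabs y) (CV_radius c).
Proof.
  intros Hc Hy. apply (Rbar_lt_le_trans _ 1); [exact Hy|].
  apply (proj1 (CV_radius_bounded c)). exists 1. intros n.
  rewrite Rabs_mult, pow1, Rabs_R1, Rmult_1_r. apply Hc.
Qed.

Lemma is_lim_seq_PSeries (c : nat -> R) y :
  ex_pseries c y -> is_lim_seq (sum_n (fun k => c k * y ^ k)) (PSeries c y).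
Proof. intros H. apply PSeries_correct, is_pseries_R in H. exact H. Qed.

Lemma PS_incr_1_derive (c : nat -> R) n : PS_incr_1 (PS_derive c) n = INR n * c n.
Proof. destruct n as [|n]; [change (0 = 0 * c 0%nat); ring | reflexivity]. Qed.

Lemma sin_sq_add_cos_sq x : sin x * sin x + cos x * cos x = 1.
Proof. generalize (sin2_cos2 x). unfold Rsqr. lra. Qed.

Lemma is_RInt_R_unique (f : R -> R) a b l1 l2 :
  is_RInt f a b l1 -> is_RInt f a b l2 -> l1 = l2.
Proof.
  intros H1 H2. apply (@is_RInt_unique R_CompleteNormedModule) in H1, H2. congruence.
Qed.

Lemma is_RInt_lincomb (f g : R -> R) a b p q lf lg :
  is_RInt f a b lf -> is_RInt g a b lg ->
  is_RInt (fun x => p * f x + q * g x) a b (p * lf + q * lg).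
Proof.
  intros Hf Hg. exact (is_RInt_plus _ _ _ _ _ _ (is_RInt_scal _ _ _ p _ Hf) (is_RInt_scal _ _ _ q _ Hg)).
Qed.

Lemma is_RInt_derive_R (F f : R -> R) a b :
  (forall x, is_derive F x (f x)) -> (forall x, continuous f x) ->
  is_RInt f a b (F b - F a).
Proof. intros HF Hf. apply (@is_RInt_derive R_CompleteNormedModule); auto. Qed.

Ltac continuity_from_derive :=
  intros; apply (@ex_derive_continuous R_AbsRing R_NormedModule); auto_derive; auto.

(* [simpl] and [auto_derive] unfold [INR (S n)] into this [match]; fold it back. *)
Ltac fold_INR_S :=
  repeat match goal with |- context [match ?n with 0%nat => 1 | S _ => INR ?n + 1 end] =>
    change (match n with 0%nat => 1 | S _ => INR n + 1 end) with (INR (S n)) end.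

Lemma is_RInt_RInt_continuous (f : R -> R) a b :
  (forall x, continuous f x) -> is_RInt f a b (RInt f a b).
Proof.
  intros Hf. apply (@RInt_correct R_CompleteNormedModule), (@ex_RInt_continuous R_CompleteNormedModule).
  auto.
Qed.

Lemma is_RInt_ext_R (f g : R -> R) a b l :
  (forall x, f x = g x) -> is_RInt f a b l -> is_RInt g a b l.
Proof. intros E. apply is_RInt_ext. intros x _. apply E. Qed.

Lemma is_RInt_const_R (c : R) a b : is_RInt (fun _ => c) a b ((b - a) * c).
Proof. exact (@is_RInt_const R_NormedModule a b c). Qed.

Lemma is_RInt_zero a b : is_RInt (fun _ => 0) a b 0.
Proof. assert (H := is_RInt_const_R 0 a b). rewrite Rmult_0_r in H. exact H. Qed.

Lemma is_RInt_scal_R (f : R -> R) a b c l :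
  is_RInt f a b l -> is_RInt (fun x => c * f x) a b (c * l).
Proof. exact (is_RInt_scal f a b c l). Qed.

(** * Wallis integrals *)

Definition Wallis (m : nat) : R := RInt (fun x => cos x ^ m) 0 (PI / 2).

Lemma is_RInt_Wallis m : is_RInt (fun x => cos x ^ m) 0 (PI / 2) (Wallis m).
Proof. apply is_RInt_RInt_continuous. continuity_from_derive. Qed.

Lemma is_RInt_sin_pow_Wallis m : is_RInt (fun x => sin x ^ m) 0 (PI / 2) (Wallis m).
Proof.
  replace (Wallis m) with (scal (-1) (opp (Wallis m))) by (change (-1 * - Wallis m = Wallis m); ring).
  apply (is_RInt_ext (fun x => scal (-1) (scal (-1) (cos (-1 * x + PI / 2) ^ m)))).
  - intros x _. change (-1 * (-1 * cos (-1 * x + PI / 2) ^ m) = sin x ^ m).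
    replace (-1 * x + PI / 2) with (PI / 2 - x) by ring. rewrite cos_shift. ring.
  - apply (@is_RInt_scal R_NormedModule), (@is_RInt_comp_lin R_NormedModule (fun x => cos x ^ m)).
    replace (-1 * 0 + PI / 2) with (PI / 2) by ring. replace (-1 * (PI / 2) + PI / 2) with 0 by ring.
    apply (@is_RInt_swap R_NormedModule), is_RInt_Wallis.
Qed.

Lemma Wallis_rec m : INR (m + 2) * Wallis (m + 2) = INR (m + 1) * Wallis m.
Proof.
  assert (H : is_RInt (fun x => INR (m + 2) * cos x ^ (m + 2) + - INR (m + 1) * cos x ^ m)
                0 (PI / 2) (sin (PI / 2) * cos (PI / 2) ^ (m + 1) - sin 0 * cos 0 ^ (m + 1))).
  { apply (is_RInt_derive_R (fun x => sin x * cos x ^ (m + 1))); [|continuity_from_derive].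
    intros x. auto_derive; auto.
    replace (m + 2)%nat with (S (S m)) by lia. replace (m + 1)%nat with (S m) by lia.
    rewrite !S_INR. simpl.
    assert (Hs := sin_sq_add_cos_sq x).
    nsatz. }
  rewrite cos_PI2, sin_0, pow_i, Rmult_0_l, Rmult_0_r, Rminus_0_r in H by lia.
  assert (E := is_RInt_R_unique _ _ _ _ _ H
                 (is_RInt_lincomb _ _ _ _ (INR (m + 2)) (- INR (m + 1)) _ _
                    (is_RInt_Wallis _) (is_RInt_Wallis _))).
  lra.
Qed.

Fixpoint cbin4 (n : nat) : R :=
  match n with O => 1 | S k => cbin4 k * (2 * INR k + 1) / (2 * INR k + 2) end.

Lemma cbin4_S n : cbin4 (S n) = cbin4 n * (2 * INR n + 1) / (2 * INR n + 2).
Proof. reflexivity. Qed.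

Lemma cbinom_cbin4 n : cbinom n = 4 ^ n * cbin4 n.
Proof.
  assert (Hc : forall k, cbinom k = INR (fact (2 * k)) / (INR (fact k) * INR (fact k))).
  { intros k. unfold cbinom, Binomial.C. now replace (2 * k - k)%nat with k by lia. }
  induction n as [|n IH]; rewrite Hc; [simpl; field|].
  assert (Hf : 0 < INR (fact n)) by apply INR_fact_lt_0.
  assert (E : INR (fact (2 * n)) = 4 ^ n * cbin4 n * (INR (fact n) * INR (fact n))).
  { rewrite <- IH, Hc. field. lra. }
  replace (2 * S n)%nat with (S (S (2 * n))) by lia.
  rewrite !fact_simpl, !mult_INR, E, !S_INR, mult_INR, cbin4_S, <- tech_pow_Rmult. simpl INR.
  assert (0 <= INR n) by apply pos_INR.
  field. lra.
Qed.

Lemma cbin4_pos n : 0 < cbin4 n.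
Proof.
  induction n as [|n IH]; simpl; [lra|].
  assert (0 <= INR n) by apply pos_INR.
  apply Rdiv_lt_0_compat; [apply Rmult_lt_0_compat|]; lra.
Qed.

Lemma cbin4_decr n : cbin4 (S n) <= cbin4 n.
Proof.
  rewrite cbin4_S. assert (Hp := cbin4_pos n). assert (0 <= INR n) by apply pos_INR.
  apply Rle_div_l; nra.
Qed.

Lemma cbin4_le_1 n : cbin4 n <= 1.
Proof. induction n as [|n IH]; [simpl; lra | generalize (cbin4_decr n); lra]. Qed.

Lemma INR_2n_1 n : INR (2 * n + 1) = 2 * INR n + 1.
Proof. rewrite plus_INR, mult_INR. reflexivity. Qed.

Lemma INR_2n_2 n : INR (2 * n + 2) = 2 * INR n + 2.
Proof. rewrite plus_INR, mult_INR. reflexivity. Qed.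

Lemma Wallis_even n : Wallis (2 * n) = PI / 2 * cbin4 n.
Proof.
  induction n as [|n IH].
  - unfold Wallis. simpl. rewrite RInt_const. change ((PI / 2 - 0) * 1 = PI / 2 * 1). ring.
  - assert (E := Wallis_rec (2 * n)).
    rewrite INR_2n_1, INR_2n_2, IH in E. replace (2 * n + 2)%nat with (2 * S n)%nat in E by lia.
    assert (0 <= INR n) by apply pos_INR.
    apply (Rmult_eq_reg_l (2 * INR n + 2)); [|lra]. rewrite E, cbin4_S. field. lra.
Qed.

Lemma Wallis_odd n : Wallis (2 * n + 1) = / ((2 * INR n + 1) * cbin4 n).
Proof.
  induction n as [|n IH].
  - apply (is_RInt_R_unique (fun x => cos x ^ 1) 0 (PI / 2)); [apply is_RInt_Wallis|].
    replace (/ ((2 * INR 0 + 1) * cbin4 0)) with (sin (PI / 2) - sin 0)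
      by (rewrite sin_PI2, sin_0; simpl; field).
    apply is_RInt_derive_R; [intros; auto_derive; auto; ring | continuity_from_derive].
  - assert (E := Wallis_rec (2 * n + 1)).
    replace (2 * n + 1 + 2)%nat with (2 * S n + 1)%nat in E by lia.
    replace (2 * n + 1 + 1)%nat with (2 * n + 2)%nat in E by lia.
    rewrite !INR_2n_1, INR_2n_2, S_INR, IH in E. rewrite cbin4_S, S_INR.
    assert (Hp := cbin4_pos n). assert (0 <= INR n) by apply pos_INR.
    apply (Rmult_eq_reg_l (2 * (INR n + 1) + 1)); [|lra]. rewrite E. field. lra.
Qed.

Lemma Wallis_decr m : Wallis (S m) <= Wallis m.
Proof.
  assert (HPI := PI_RGT_0).
  apply (is_RInt_le _ _ 0 (PI / 2) _ _ ltac:(lra) (is_RInt_Wallis _) (is_RInt_Wallis _)).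
  intros x Hx. simpl.
  assert (0 <= cos x) by (apply cos_ge_0; lra).
  assert (cos x <= 1) by apply COS_bound.
  assert (0 <= cos x ^ m) by (apply pow_le; lra).
  nra.
Qed.

Lemma cbin4_sq_lower n : / (2 * INR n + 1) <= PI / 2 * cbin4 n ^ 2.
Proof.
  assert (H := Wallis_decr (2 * n)). replace (S (2 * n)) with (2 * n + 1)%nat in H by lia.
  rewrite Wallis_odd, Wallis_even in H.
  assert (Hp := cbin4_pos n). assert (0 <= INR n) by apply pos_INR.
  rewrite Rinv_mult in H. apply (Rmult_le_compat_r (cbin4 n)) in H; [|lra].
  rewrite Rmult_assoc, Rinv_l in H by lra. lra.
Qed.

Lemma cbin4_sq_upper n : PI * INR n * cbin4 n ^ 2 <= 1.
Proof.
  destruct n as [|n]; [simpl; lra|].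
  assert (H := Wallis_decr (2 * n + 1)). replace (S (2 * n + 1)) with (2 * S n)%nat in H by lia.
  rewrite Wallis_odd, Wallis_even in H.
  assert (Hp := cbin4_pos n). assert (0 <= INR n) by apply pos_INR.
  assert (E : (2 * INR n + 1) * cbin4 n = (2 * INR (S n)) * cbin4 (S n))
    by (rewrite cbin4_S, S_INR; field; lra).
  rewrite E in H.
  assert (Hq := cbin4_pos (S n)). assert (0 < INR (S n)) by (rewrite S_INR; lra).
  apply (Rmult_le_compat_r (2 * INR (S n) * cbin4 (S n))) in H; [|nra].
  rewrite Rinv_l in H by nra. nra.
Qed.

Lemma is_lim_seq_Wallis_product : is_lim_seq (fun n => INR n * cbin4 n ^ 2) (/ PI).
Proof.
  assert (HPI := PI_RGT_0).
  apply (is_lim_seq_le_le (fun n => / PI + (- / PI) / (INR n + 1)) _ (fun _ => / PI)).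
  - intros n. assert (Hl := cbin4_sq_lower n). assert (Hu := cbin4_sq_upper n).
    assert (0 <= INR n) by apply pos_INR.
    assert (Hq : 1 <= (INR n + 1) * (PI * cbin4 n ^ 2)).
    { apply (Rmult_le_compat_l (2 * INR n + 1)) in Hl; [|lra].
      rewrite Rinv_r in Hl by lra. assert (0 <= cbin4 n ^ 2) by apply pow2_ge_0. nra. }
    replace (INR n * cbin4 n ^ 2) with (INR n * (PI * cbin4 n ^ 2) * / PI) by (field; lra).
    split.
    + replace (/ PI + - / PI / (INR n + 1)) with (INR n * / (INR n + 1) * / PI) by (field; lra).
      apply Rmult_le_compat_r; [left; apply Rinv_0_lt_compat; lra|].
      apply Rmult_le_compat_l; [lra|].
      apply (Rmult_le_reg_l (INR n + 1)); [lra|]. rewrite Rinv_r by lra. exact Hq.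
    + rewrite <- (Rmult_1_l (/ PI)) at 2. apply Rmult_le_compat_r; [left; apply Rinv_0_lt_compat|]; lra.
  - apply is_lim_seq_const_plus_inv_succ.
  - apply is_lim_seq_const.
Qed.

Lemma is_lim_seq_cbin4 : is_lim_seq cbin4 0.
Proof.
  assert (HPI := PI_RGT_0).
  apply (is_lim_seq_ext (fun n => sqrt (cbin4 n ^ 2))).
  { intros n. apply sqrt_pow2, Rlt_le, cbin4_pos. }
  rewrite <- sqrt_0. apply is_lim_seq_continuous; [apply continuity_pt_sqrt; lra|].
  apply is_lim_seq_incr_1.
  apply (is_lim_seq_le_le (fun _ => 0) _ (fun n => 0 + / PI / (INR n + 1))).
  - intros n. split; [apply pow2_ge_0|].
    assert (Hu := cbin4_sq_upper (S n)). rewrite S_INR in Hu.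
    assert (0 <= INR n) by apply pos_INR.
    rewrite Rplus_0_l. unfold Rdiv. rewrite <- Rinv_mult.
    apply (Rmult_le_reg_l (PI * (INR n + 1))); [apply Rmult_lt_0_compat; lra|].
    rewrite Rinv_r by (apply Rmult_integral_contrapositive; lra). lra.
  - apply is_lim_seq_const.
  - apply is_lim_seq_const_plus_inv_succ.
Qed.

(** * The sum of the reciprocal squares *)

Definition Jint (n : nat) : R := RInt (fun x => x ^ 2 * cos x ^ (2 * n)) 0 (PI / 2).

Lemma is_RInt_Jint n : is_RInt (fun x => x ^ 2 * cos x ^ (2 * n)) 0 (PI / 2) (Jint n).
Proof. apply is_RInt_RInt_continuous. continuity_from_derive. Qed.

Lemma Jint_0 : Jint 0 = PI ^ 3 / 24.
Proof.
  apply (is_RInt_R_unique (fun x => x ^ 2 * cos x ^ (2 * 0)) 0 (PI / 2)); [apply is_RInt_Jint|].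
  replace (PI ^ 3 / 24) with ((PI / 2) ^ 3 / 3 - 0 ^ 3 / 3) by field.
  apply (is_RInt_derive_R (fun x => x ^ 3 / 3));
    [intros x; auto_derive; auto; simpl; field | continuity_from_derive].
Qed.

Lemma Jint_ge_0 n : 0 <= Jint n.
Proof.
  apply (is_RInt_le _ _ 0 (PI / 2) _ _ ltac:(generalize PI_RGT_0; lra) (is_RInt_zero _ _) (is_RInt_Jint n)).
  intros x _. rewrite pow_mult. apply Rmult_le_pos; [apply pow2_ge_0 | apply pow_le, pow2_ge_0].
Qed.

Lemma Jint_rec k :
  Wallis (2 * S k) = (2 * INR k + 1) * (INR k + 1) * Jint k - 2 * (INR k + 1) ^ 2 * Jint (S k).
Proof.
  assert (HJ := is_RInt_Jint (S k)). assert (HW := is_RInt_Wallis (2 * S k)).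
  replace (2 * S k)%nat with (S (S (2 * k))) in HJ, HW |- * by lia.
  set (F x := x * cos x ^ S (S (2 * k)) + (INR k + 1) * x ^ 2 * sin x * cos x ^ S (2 * k)).
  set (f x := 1 * cos x ^ S (S (2 * k)) +
              1 * (2 * (INR k + 1) ^ 2 * (x ^ 2 * cos x ^ S (S (2 * k))) +
                   - ((2 * INR k + 1) * (INR k + 1)) * (x ^ 2 * cos x ^ (2 * k)))).
  assert (HF : forall x, is_derive F x (f x)).
  { intros x. unfold F, f.
    assert (Hm : INR (2 * k) = 2 * INR k) by (rewrite mult_INR; reflexivity).
    revert Hm. generalize (2 * k)%nat. intros m Hm. (* otherwise [auto_derive] unfolds [2 * k] *)
    auto_derive; auto.
    fold_INR_S. rewrite S_INR, Hm. simpl.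
    assert (Hs := sin_sq_add_cos_sq x).
    nsatz. }
  assert (H := is_RInt_derive_R F f 0 (PI / 2) HF ltac:(unfold f; continuity_from_derive)).
  replace (F (PI / 2) - F 0) with 0 in H by (unfold F; rewrite cos_PI2, sin_0; simpl; ring).
  assert (E := is_RInt_R_unique _ _ _ _ _ H
    (is_RInt_lincomb _ _ _ _ 1 1 _ _ HW (is_RInt_lincomb _ _ _ _ _ _ _ _ HJ (is_RInt_Jint k)))).
  lra.
Qed.

Lemma x_cos_le_sin x : 0 <= x <= PI / 2 -> x * cos x <= sin x.
Proof.
  intros Hx. assert (HPI := PI_RGT_0).
  enough (H : sin 0 - 0 * cos 0 <= sin x - x * cos x) by (rewrite sin_0 in H; lra).
  apply (nondecreasing_derive_nonneg (fun t => sin t - t * cos t) (fun t => t * sin t));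
    [lra | intros t _; auto_derive; auto; ring |].
  intros t Ht. apply Rmult_le_pos; [lra | apply sin_ge_0; lra].
Qed.

Lemma Jint_le_Wallis_diff k : Jint (S k) <= Wallis (2 * k) - Wallis (2 * S k).
Proof.
  replace (Wallis (2 * k) - Wallis (2 * S k)) with (1 * Wallis (2 * k) + -1 * Wallis (2 * S k)) by ring.
  apply (is_RInt_le _ _ 0 (PI / 2) _ _ ltac:(generalize PI_RGT_0; lra) (is_RInt_Jint (S k))
           (is_RInt_lincomb _ _ _ _ 1 (-1) _ _ (is_RInt_Wallis _) (is_RInt_Wallis _))).
  intros x Hx.
  assert (Hc : 0 <= cos x) by (apply cos_ge_0; lra).
  assert (Hxc := x_cos_le_sin x ltac:(lra)).
  assert (Hs := sin_sq_add_cos_sq x).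
  replace (2 * S k)%nat with (S (S (2 * k))) by lia.
  change (cos x ^ S (S (2 * k))) with (cos x * (cos x * cos x ^ (2 * k))).
  set (P := cos x ^ (2 * k)).
  assert (0 <= P) by (apply pow_le; lra).
  assert (0 <= x * cos x) by (apply Rmult_le_pos; lra).
  assert (x * cos x * (x * cos x) * P <= sin x * sin x * P)
    by (apply Rmult_le_compat_r; [|apply Rmult_le_compat]; lra).
  replace (sin x * sin x) with (1 - cos x * cos x) in * by lra.
  lra.
Qed.

(* Matsuoka's argument: by [Jint_rec],
   1/(n+1)^2 = 2 (Jint n / Wallis (2n) - Jint (n+1) / Wallis (2n+2)). *)
Lemma H2_Jint n : H2 n = PI ^ 2 / 6 - 2 * (Jint n / Wallis (2 * n)).
Proof.
  assert (HPI := PI_RGT_0).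
  induction n as [|n IH].
  - simpl H2. rewrite Jint_0, Wallis_even. simpl. field. lra.
  - change (H2 (S n)) with (H2 n + / INR (S n) ^ 2). rewrite IH, !Wallis_even, cbin4_S.
    assert (E := Jint_rec n). rewrite Wallis_even, cbin4_S in E.
    assert (Hp := cbin4_pos n). assert (0 <= INR n) by apply pos_INR.
    assert (EJ : Jint (S n) = ((2 * INR n + 1) * (INR n + 1) * Jint n
                   - PI / 2 * (cbin4 n * (2 * INR n + 1) / (2 * INR n + 2))) / (2 * (INR n + 1) ^ 2))
      by (rewrite E; field; lra).
    rewrite EJ, S_INR. field. lra.
Qed.

Lemma Jint_Wallis_ratio_bounds k :
  0 <= Jint (S k) / Wallis (2 * S k) <= / (2 * INR k + 1).
Proof.
  assert (HPI := PI_RGT_0).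
  assert (Hp := cbin4_pos (S k)). assert (0 <= INR k) by apply pos_INR.
  assert (HB := Jint_le_Wallis_diff k). assert (HN := Jint_ge_0 (S k)).
  assert (HW : 0 < Wallis (2 * S k)) by (rewrite Wallis_even; apply Rmult_lt_0_compat; lra).
  assert (Hd : Wallis (2 * k) - Wallis (2 * S k) = Wallis (2 * S k) / (2 * INR k + 1)).
  { rewrite !Wallis_even, cbin4_S. field. lra. }
  split; [apply Rdiv_le_0_compat; lra|].
  apply Rle_div_l; [exact HW|]. unfold Rdiv in Hd. lra.
Qed.

Lemma H2_bounds n : PI ^ 2 / 6 - 4 / (INR n + 1) <= H2 n <= PI ^ 2 / 6.
Proof.
  assert (HPI := PI_RGT_0). assert (HP4 := PI_4).
  destruct n as [|n].
  - simpl. split; nra.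
  - rewrite H2_Jint. destruct (Jint_Wallis_ratio_bounds n) as [H1 H2]. rewrite S_INR.
    assert (0 <= INR n) by apply pos_INR.
    assert (/ (2 * INR n + 1) <= 2 / (INR n + 1 + 1)).
    { apply Rle_div_r; [lra|]. rewrite Rmult_comm. apply Rle_div_l; [lra|]. unfold Rdiv. lra. }
    lra.
Qed.

Lemma is_lim_seq_H2 : is_lim_seq H2 (PI ^ 2 / 6).
Proof.
  apply (is_lim_seq_le_le (fun n => PI ^ 2 / 6 + (-4) / (INR n + 1)) _ (fun _ => PI ^ 2 / 6)).
  - intros n. destruct (H2_bounds n). unfold Rdiv in *. split; lra.
  - apply is_lim_seq_const_plus_inv_succ.
  - apply is_lim_seq_const.
Qed.

(** * Catalan's constant as a log-cosine integral *)

(* Partial sums of ln (1 + 2 s cos w + s^2) = 2 Re ln (1 + s e^(iw))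
   = 2 sum_n (-1)^n s^(n+1) cos ((n+1) w) / (n+1). *)
Fixpoint lncos_fourier (N : nat) (s w : R) : R :=
  match N with
  | O => 0
  | S n => lncos_fourier n s w + 2 * (-1) ^ n * s ^ S n * cos (INR (S n) * w) / INR (S n)
  end.

Fixpoint lncos_fourier_ds (N : nat) (s w : R) : R :=
  match N with
  | O => 0
  | S n => lncos_fourier_ds n s w + 2 * (-1) ^ n * s ^ n * cos (INR (S n) * w)
  end.

Lemma is_derive_lncos_fourier N s w :
  is_derive (fun s => lncos_fourier N s w) s (lncos_fourier_ds N s w).
Proof.
  induction N as [|N IH]; cbn [lncos_fourier lncos_fourier_ds].
  - apply (@is_derive_const R_AbsRing R_NormedModule).
  - apply (@is_derive_plus R_AbsRing R_NormedModule); [exact IH|].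
    assert (INR (S N) <> 0) by (apply not_0_INR; lia).
    auto_derive; auto. fold_INR_S. simpl pred. field. auto.
Qed.

Lemma cos_mult_succ k w :
  cos (INR (S (S k)) * w) = 2 * cos w * cos (INR (S k) * w) - cos (INR k * w).
Proof.
  replace (INR (S (S k)) * w) with (INR (S k) * w + w) by (rewrite !S_INR; ring).
  replace (INR k * w) with (INR (S k) * w - w) by (rewrite !S_INR; ring).
  rewrite cos_plus, cos_minus. ring.
Qed.

Lemma lncos_fourier_ds_closed N s w :
  (1 + 2 * s * cos w + s ^ 2) * lncos_fourier_ds N s w
  = 2 * (cos w + s) - 2 * (-1) ^ N * s ^ N * (cos (INR (S N) * w) + s * cos (INR N * w)).
Proof.
  induction N as [|N IH].
  - simpl. rewrite Rmult_1_l, Rmult_0_l, cos_0. ring.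
  - simpl lncos_fourier_ds. rewrite Rmult_plus_distr_l, IH, cos_mult_succ. simpl. ring.
Qed.

Lemma lncos_fourier_ds_error N s w : 0 <= s <= 1 -> 0 <= cos w ->
  Rabs ((2 * cos w + 2 * s) / (1 + 2 * s * cos w + s ^ 2) - lncos_fourier_ds N s w) <= 4 * s ^ N.
Proof.
  intros Hs Hc.
  set (den := 1 + 2 * s * cos w + s ^ 2).
  assert (Hd : 1 <= den) by (unfold den; assert (0 <= s * cos w) by (apply Rmult_le_pos; lra); nra).
  set (r := (-1) ^ N * (cos (INR (S N) * w) + s * cos (INR N * w))).
  assert (Hr : Rabs r <= 2).
  { unfold r. rewrite Rabs_mult, pow_1_abs, Rmult_1_l.
    eapply Rle_trans; [apply Rabs_triang|]. rewrite Rabs_mult, (Rabs_pos_eq s) by lra.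
    assert (Rabs (cos (INR (S N) * w)) <= 1) by apply Rabs_le, COS_bound.
    assert (Rabs (cos (INR N * w)) <= 1) by apply Rabs_le, COS_bound.
    assert (0 <= Rabs (cos (INR N * w))) by apply Rabs_pos.
    nra. }
  replace ((2 * cos w + 2 * s) / den - lncos_fourier_ds N s w) with (2 * s ^ N * r / den).
  2: { apply (Rmult_eq_reg_l den); [|lra]. unfold r, den.
       rewrite Rmult_minus_distr_l, lncos_fourier_ds_closed. field. fold den. lra. }
  assert (Hsn : 0 <= s ^ N) by (apply pow_le; lra).
  unfold Rdiv. rewrite !Rabs_mult, Rabs_pos_eq, (Rabs_pos_eq (s ^ N)), Rabs_inv, (Rabs_pos_eq den) by lra.
  assert (Hi : / den <= 1) by (rewrite <- Rinv_1; apply Rinv_le_contravar; lra).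
  assert (0 < / den) by (apply Rinv_0_lt_compat; lra).
  assert (0 <= Rabs r) by apply Rabs_pos.
  apply (Rle_trans _ (2 * s ^ N * Rabs r)); [|nra].
  rewrite <- (Rmult_1_r (2 * s ^ N * Rabs r)) at 2. apply Rmult_le_compat_l; [nra | lra].
Qed.

Lemma lncos_fourier_at_0 N w : lncos_fourier N 0 w = 0.
Proof.
  induction N as [|N IH]; [reflexivity|].
  cbn [lncos_fourier]. rewrite IH, pow_i by lia. unfold Rdiv. ring.
Qed.

Lemma lncos_fourier_error N w : 0 <= cos w ->
  Rabs (ln (2 + 2 * cos w) - lncos_fourier N 1 w) <= 4 / INR (S N).
Proof.
  intros Hc.
  assert (HN : 0 < INR (S N)) by (apply lt_0_INR; lia).
  assert (Hden : forall s, 0 <= s -> 1 <= 1 + 2 * s * cos w + s ^ 2).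
  { intros s Hs. assert (0 <= s * cos w) by (apply Rmult_le_pos; lra). nra. }
  assert (H := Rabs_diff_le_derive_bound
    (fun s => ln (1 + 2 * s * cos w + s ^ 2) - lncos_fourier N s w)
    (fun s => (2 * cos w + 2 * s) / (1 + 2 * s * cos w + s ^ 2) - lncos_fourier_ds N s w)
    (fun s => 4 * s ^ S N / INR (S N)) (fun s => 4 * s ^ N) 0 1 ltac:(lra)).
  cbv beta in H.
  replace (1 + 2 * 0 * cos w + 0 ^ 2) with 1 in H by ring.
  replace (1 + 2 * 1 * cos w + 1 ^ 2) with (2 + 2 * cos w) in H by ring.
  rewrite ln_1, lncos_fourier_at_0, !Rminus_0_r in H.
  replace (4 * 1 ^ S N / INR (S N) - 4 * 0 ^ S N / INR (S N)) with (4 / INR (S N)) in H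
    by (rewrite pow1, pow_i by lia; field; lra).
  apply H.
  - intros s Hs. apply (@is_derive_minus R_AbsRing R_NormedModule); [|apply is_derive_lncos_fourier].
    specialize (Hden s ltac:(lra)). auto_derive; [lra|]. field. lra.
  - intros s _. auto_derive; [lra|]. fold_INR_S. simpl pred. field. lra.
  - intros s Hs. apply lncos_fourier_ds_error; lra.
Qed.

Lemma sin_mult_half_PI M :
  sin (INR (S (2 * M)) * (PI / 2)) = (-1) ^ M /\ sin (INR (S (2 * M + 1)) * (PI / 2)) = 0.
Proof.
  induction M as [|M [IH1 IH2]].
  - simpl. replace (1 * (PI / 2)) with (PI / 2) by ring. replace ((1 + 1) * (PI / 2)) with PI by field.
    rewrite sin_PI2, sin_PI. split; ring.
  - replace (INR (S (2 * S M)) * (PI / 2)) with (INR (S (2 * M)) * (PI / 2) + PI)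
      by (rewrite !S_INR, !mult_INR, !S_INR, INR_0; field).
    replace (INR (S (2 * S M + 1)) * (PI / 2)) with (INR (S (2 * M + 1)) * (PI / 2) + PI)
      by (rewrite !S_INR, !plus_INR, !mult_INR, !S_INR, INR_0; field).
    rewrite !neg_sin, IH1, IH2. simpl. split; ring.
Qed.

Lemma is_RInt_lncos_fourier_term n :
  is_RInt (fun w => 2 * (-1) ^ n * 1 ^ S n * cos (INR (S n) * w) / INR (S n)) 0 (PI / 2)
    (2 * (-1) ^ n * sin (INR (S n) * (PI / 2)) / INR (S n) ^ 2).
Proof.
  assert (HN : INR (S n) <> 0) by (apply not_0_INR; lia).
  replace (2 * (-1) ^ n * sin (INR (S n) * (PI / 2)) / INR (S n) ^ 2) with
    (2 * (-1) ^ n * sin (INR (S n) * (PI / 2)) / INR (S n) ^ 2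
     - 2 * (-1) ^ n * sin (INR (S n) * 0) / INR (S n) ^ 2)
    by (rewrite Rmult_0_r, sin_0; field; auto).
  apply (is_RInt_derive_R (fun w => 2 * (-1) ^ n * sin (INR (S n) * w) / INR (S n) ^ 2));
    [|continuity_from_derive].
  intros w. auto_derive; auto. fold_INR_S. rewrite pow1. field. auto.
Qed.

Fixpoint lncos_fourier_integral (N : nat) : R :=
  match N with
  | O => 0
  | S n => lncos_fourier_integral n + 2 * (-1) ^ n * sin (INR (S n) * (PI / 2)) / INR (S n) ^ 2
  end.

Lemma is_RInt_lncos_fourier N :
  is_RInt (fun w => lncos_fourier N 1 w) 0 (PI / 2) (lncos_fourier_integral N).
Proof.
  induction N as [|N IH].
  - apply is_RInt_zero.
  - apply (is_RInt_ext_R (fun w => 1 * lncos_fourier N 1 w +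
                                 1 * (2 * (-1) ^ N * 1 ^ S N * cos (INR (S N) * w) / INR (S N)))).
    { intros w. cbn [lncos_fourier]. ring. }
    replace (lncos_fourier_integral (S N)) with
      (1 * lncos_fourier_integral N + 1 * (2 * (-1) ^ N * sin (INR (S N) * (PI / 2)) / INR (S N) ^ 2))
      by (cbn [lncos_fourier_integral]; ring).
    apply is_RInt_lincomb; [exact IH | apply is_RInt_lncos_fourier_term].
Qed.

Definition catalan_term (n : nat) : R := (-1) ^ n / INR (2 * n + 1) ^ 2.

Lemma lncos_fourier_integral_odd M :
  lncos_fourier_integral (2 * M + 1) = 2 * sum_n catalan_term M.
Proof.
  unfold catalan_term.
  induction M as [|M IH].
  - rewrite sum_O. simpl. rewrite Rmult_1_l, sin_PI2. field.
  - rewrite sum_Sn. replace (2 * S M + 1)%nat with (S (S (2 * M + 1))) at 1 by lia.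
    cbn [lncos_fourier_integral]. rewrite IH.
    destruct (sin_mult_half_PI M) as [_ H0]. destruct (sin_mult_half_PI (S M)) as [H1 _].
    rewrite H0. replace (S (2 * M + 1)) with (2 * S M)%nat by lia. rewrite H1, pow_1_even.
    replace (S (2 * S M)) with (2 * S M + 1)%nat by lia.
    change (plus ?x ?y) with (x + y).
    assert (0 < INR (2 * S M)) by (apply lt_0_INR; lia).
    assert (0 < INR (2 * S M + 1)) by (apply lt_0_INR; lia).
    field. lra.
Qed.

Definition lncos_integral : R := RInt (fun w => ln (2 + 2 * cos w)) 0 (PI / 2).

Lemma is_RInt_lncos_integral : is_RInt (fun w => ln (2 + 2 * cos w)) 0 (PI / 2) lncos_integral.
Proof.
  apply (@RInt_correct R_CompleteNormedModule), (@ex_RInt_continuous R_CompleteNormedModule).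
  intros w Hw. rewrite Rmin_left, Rmax_right in Hw by (generalize PI_RGT_0; lra).
  assert (0 <= cos w) by (apply cos_ge_0; lra).
  apply (@ex_derive_continuous R_AbsRing R_NormedModule). auto_derive. lra.
Qed.

Lemma catalan_lncos_integral : catalan = lncos_integral / 2.
Proof.
  assert (HPI := PI_RGT_0).
  apply is_series_unique. change (is_lim_seq (sum_n catalan_term) (lncos_integral / 2)).
  apply (is_lim_seq_le_le (fun M => lncos_integral / 2 + (- (PI / 2)) / (INR M + 1)) _
                          (fun M => lncos_integral / 2 + (PI / 2) / (INR M + 1))).
  - intros M.
    assert (Hb : forall w, 0 <= w <= PI / 2 ->
      norm (1 * ln (2 + 2 * cos w) + -1 * lncos_fourier (2 * M + 1) 1 w) <= 4 / INR (S (2 * M + 1))).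
    { intros w Hw. change norm with Rabs.
      replace (1 * ln (2 + 2 * cos w) + -1 * lncos_fourier (2 * M + 1) 1 w)
        with (ln (2 + 2 * cos w) - lncos_fourier (2 * M + 1) 1 w) by ring.
      apply lncos_fourier_error, cos_ge_0; lra. }
    assert (H := norm_RInt_le_const _ 0 (PI / 2) _ _ ltac:(lra) Hb
      (is_RInt_lincomb _ _ _ _ 1 (-1) _ _ is_RInt_lncos_integral (is_RInt_lncos_fourier _))).
    change norm with Rabs in H. rewrite lncos_fourier_integral_odd in H.
    replace ((PI / 2 - 0) * (4 / INR (S (2 * M + 1)))) with (PI / (INR M + 1)) in H
      by (rewrite S_INR, INR_2n_1; field; generalize (pos_INR M); lra).
    apply Rabs_le_between in H.
    assert (0 <= INR M) by apply pos_INR.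
    unfold Rdiv in *. split; lra.
  - apply is_lim_seq_const_plus_inv_succ.
  - apply is_lim_seq_const_plus_inv_succ.
Qed.

(** * Generating functions of the central binomial coefficients *)

Lemma Rabs_cbin4_le_1 n : Rabs (cbin4 n) <= 1.
Proof. rewrite Rabs_pos_eq; [apply cbin4_le_1 | apply Rlt_le, cbin4_pos]. Qed.

Lemma CV_radius_cbin4 y : Rabs y < 1 -> Rbar_lt (Rabs y) (CV_radius cbin4).
Proof. apply Rbar_lt_CV_radius_bounded, Rabs_cbin4_le_1. Qed.

Lemma ex_pseries_cbin4 y : Rabs y < 1 -> ex_pseries cbin4 y.
Proof. intros Hy. apply CV_radius_inside, CV_radius_cbin4, Hy. Qed.

Lemma ex_pseries_derive_cbin4 y : Rabs y < 1 -> ex_pseries (PS_derive cbin4) y.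
Proof. intros Hy. apply ex_pseries_derive, CV_radius_cbin4, Hy. Qed.

(* The recurrence [2 (n+1) c_(n+1) = (2n+1) c_n] turns into [2 (1 - y) f' = f]. *)
Lemma PSeries_cbin4_ode y : Rabs y < 1 ->
  2 * (1 - y) * PSeries (PS_derive cbin4) y = PSeries cbin4 y.
Proof.
  intros Hy.
  assert (E : PSeries (PS_scal 2 (PS_derive cbin4)) y =
              PSeries (PS_plus (PS_scal 2 (PS_incr_1 (PS_derive cbin4))) cbin4) y).
  { apply PSeries_ext. intros n. unfold PS_scal, PS_plus. rewrite PS_incr_1_derive.
    change (2 * PS_derive cbin4 n = 2 * (INR n * cbin4 n) + cbin4 n).
    unfold PS_derive. rewrite cbin4_S, S_INR. field. generalize (pos_INR n); lra. }
  rewrite PSeries_scal, PSeries_plus, PSeries_scal, PSeries_incr_1 in E.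
  - change (2 * PSeries (PS_derive cbin4) y = 2 * (y * PSeries (PS_derive cbin4) y) + PSeries cbin4 y) in E.
    lra.
  - apply ex_pseries_scal; [apply Rmult_comm|]. apply ex_pseries_incr_1, ex_pseries_derive_cbin4, Hy.
  - apply ex_pseries_cbin4, Hy.
Qed.

Lemma PSeries_cbin4 y : Rabs y < 1 -> PSeries cbin4 y * sqrt (1 - y) = 1.
Proof.
  intros Hy.
  assert (Hd : forall t, Rabs t < 1 -> is_derive (fun t => PSeries cbin4 t * sqrt (1 - t)) t 0).
  { intros t Ht. assert (Ht' := Rabs_def2 _ _ Ht).
    assert (Hs : 0 < sqrt (1 - t)) by (apply sqrt_lt_R0; lra).
    assert (Hss : sqrt (1 - t) * sqrt (1 - t) = 1 - t) by (apply sqrt_sqrt; lra).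
    replace 0 with (PSeries (PS_derive cbin4) t * sqrt (1 - t) + PSeries cbin4 t * (- / (2 * sqrt (1 - t)))).
    - apply (is_derive_mult (PSeries cbin4) (fun t => sqrt (1 - t)));
        [apply is_derive_PSeries, CV_radius_cbin4, Ht | | apply Rmult_comm].
      auto_derive; [lra|]. unfold Rminus. ring.
    - rewrite <- (PSeries_cbin4_ode t Ht). set (s := sqrt (1 - t)) in *.
      replace (1 - t) with (s * s) by lra. field. lra. }
  rewrite (derive_zero_const_unit_interval _ Hd y Hy), PSeries_0, Rminus_0_r, sqrt_1. simpl. ring.
Qed.

Definition cbin4n (n : nat) : R := match n with O => 0 | S _ => cbin4 n / INR n end.

Lemma cbin4n_S n : cbin4n (S n) = cbin4 (S n) / INR (S n).
Proof. reflexivity. Qed.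

Lemma cbin4n_ge_0 n : 0 <= cbin4n n.
Proof.
  destruct n as [|n]; [simpl; lra|]. rewrite cbin4n_S.
  apply Rlt_le, Rdiv_lt_0_compat; [apply cbin4_pos | apply lt_0_INR; lia].
Qed.

Lemma Rabs_cbin4n_le_1 n : Rabs (cbin4n n) <= 1.
Proof.
  rewrite Rabs_pos_eq by apply cbin4n_ge_0.
  destruct n as [|n]; [simpl; lra|]. rewrite cbin4n_S.
  assert (1 <= INR (S n)) by (apply (le_INR 1); lia).
  apply Rle_div_l; [lra|]. generalize (cbin4_le_1 (S n)), (cbin4_pos (S n)). nra.
Qed.

Lemma PS_derive_cbin4n n : PS_derive cbin4n n = PS_decr_1 cbin4 n.
Proof.
  unfold PS_derive, PS_decr_1. rewrite cbin4n_S. field. apply not_0_INR. lia.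
Qed.

Lemma PSeries_derive_cbin4n t : Rabs t < 1 ->
  PSeries (PS_derive cbin4n) t = / (sqrt (1 - t) * (1 + sqrt (1 - t))).
Proof.
  intros Ht. assert (Ht' := Rabs_def2 _ _ Ht).
  rewrite (PSeries_ext _ _ _ PS_derive_cbin4n).
  assert (Hf := PSeries_cbin4 t Ht).
  rewrite (PSeries_decr_1 _ _ (ex_pseries_cbin4 t Ht)) in Hf. change (cbin4 0) with 1 in Hf.
  destruct (Req_dec t 0) as [->|Ht0].
  - rewrite PSeries_0, Rminus_0_r, sqrt_1. unfold PS_decr_1. simpl. field.
  - assert (Hs : 0 < sqrt (1 - t)) by (apply sqrt_lt_R0; lra).
    assert (Hss : sqrt (1 - t) * sqrt (1 - t) = 1 - t) by (apply sqrt_sqrt; lra).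
    apply (Rmult_eq_reg_l t); [|exact Ht0]. set (s := sqrt (1 - t)) in *.
    assert (EP : t * PSeries (PS_decr_1 cbin4) t = / s - 1)
      by (apply (Rmult_eq_reg_r s); [field_simplify; lra | lra]).
    rewrite EP. replace t with (1 - s * s) by lra. field. lra.
Qed.

Lemma PSeries_cbin4n y : Rabs y < 1 ->
  PSeries cbin4n y = 4 * ln 2 - 2 * ln (2 + 2 * sqrt (1 - y)).
Proof.
  intros Hy.
  assert (Hd : forall t, Rabs t < 1 ->
    is_derive (fun t => PSeries cbin4n t - (4 * ln 2 - 2 * ln (2 + 2 * sqrt (1 - t)))) t 0).
  { intros t Ht. assert (Ht' := Rabs_def2 _ _ Ht).
    assert (Hs : 0 < sqrt (1 - t)) by (apply sqrt_lt_R0; lra).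
    rewrite <- (Rminus_diag_eq _ _ (PSeries_derive_cbin4n t Ht)).
    apply (@is_derive_minus R_AbsRing R_NormedModule).
    - apply is_derive_PSeries, Rbar_lt_CV_radius_bounded; [apply Rabs_cbin4n_le_1 | exact Ht].
    - auto_derive; replace (1 + - t) with (1 - t) by ring; [lra|]. field. lra. }
  apply Rminus_diag_uniq.
  rewrite (derive_zero_const_unit_interval _ Hd y Hy), PSeries_0, Rminus_0_r, sqrt_1. simpl cbin4n.
  replace (2 + 2 * 1) with (2 * 2) by ring. rewrite ln_mult by lra. ring.
Qed.

Lemma cbin4n_S_le n : cbin4n (S n) <= 2 * (cbin4 n - cbin4 (S n)).
Proof.
  assert (0 <= INR n) by apply pos_INR.
  replace (2 * (cbin4 n - cbin4 (S n))) with (cbin4 n / INR (S n))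
    by (rewrite cbin4_S, S_INR; field; lra).
  rewrite cbin4n_S. apply Rmult_le_compat_r; [rewrite S_INR; left; apply Rinv_0_lt_compat; lra|].
  apply cbin4_decr.
Qed.

Lemma sum_cbin4n_tail y N j : 0 <= y <= 1 ->
  0 <= sum_n (fun k => cbin4n k * y ^ k) (j + N) - sum_n (fun k => cbin4n k * y ^ k) N
    <= 2 * (cbin4 N - cbin4 (j + N)).
Proof.
  intros Hy. induction j as [|j IH]; [simpl; lra|].
  rewrite Nat.add_succ_l, sum_Sn. change (plus ?x ?y) with (x + y).
  assert (Hb := cbin4n_ge_0 (S (j + N))). assert (Hl := cbin4n_S_le (j + N)).
  assert (0 <= y ^ S (j + N) <= 1)
    by (split; [apply pow_le | rewrite <- (pow1 (S (j + N))); apply pow_incr]; lra).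
  assert (0 <= cbin4n (S (j + N)) * y ^ S (j + N) <= cbin4n (S (j + N))) by (split; nra).
  lra.
Qed.

Lemma PSeries_cbin4n_tail y N : 0 <= y < 1 ->
  0 <= PSeries cbin4n y - sum_n (fun k => cbin4n k * y ^ k) N <= 2 * cbin4 N.
Proof.
  intros Hy.
  assert (L : is_lim_seq (fun j => sum_n (fun k => cbin4n k * y ^ k) (j + N)) (PSeries cbin4n y)).
  { apply (is_lim_seq_incr_n (sum_n (fun k => cbin4n k * y ^ k)) N), is_lim_seq_PSeries.
    apply CV_radius_inside, Rbar_lt_CV_radius_bounded; [apply Rabs_cbin4n_le_1 | rewrite Rabs_pos_eq; lra]. }
  assert (L' := is_lim_seq_minus' _ _ _ _ L (is_lim_seq_const (sum_n (fun k => cbin4n k * y ^ k) N))).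
  assert (T := fun j => sum_cbin4n_tail y N j ltac:(lra)).
  split.
  - apply (is_lim_seq_le _ _ _ _ (fun j => proj1 (T j)) (is_lim_seq_const _) L').
  - assert (B : forall j, 2 * (cbin4 N - cbin4 (j + N)) <= 2 * cbin4 N)
      by (intros j; generalize (cbin4_pos (j + N)); lra).
    apply (is_lim_seq_le _ _ _ _ (fun j => Rle_trans _ _ _ (proj2 (T j)) (B j)) L' (is_lim_seq_const _)).
Qed.

Lemma is_RInt_sum_cbin4n_sin2 N :
  is_RInt (fun x => sum_n (fun k => cbin4n k * (sin x ^ 2) ^ k) N) 0 (PI / 2)
    (PI / 2 * sum_n (fun k => cbin4n k * cbin4 k) N).
Proof.
  assert (Hk : forall k, is_RInt (fun x => cbin4n k * (sin x ^ 2) ^ k) 0 (PI / 2)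
                           (PI / 2 * (cbin4n k * cbin4 k))).
  { intros k. replace (PI / 2 * (cbin4n k * cbin4 k)) with (cbin4n k * Wallis (2 * k))
      by (rewrite Wallis_even; ring).
    apply (is_RInt_ext_R (fun x => cbin4n k * sin x ^ (2 * k))); [intros x; now rewrite pow_mult|].
    apply is_RInt_scal_R, is_RInt_sin_pow_Wallis. }
  induction N as [|N IH].
  - rewrite sum_O. apply (is_RInt_ext_R (fun x => cbin4n 0 * (sin x ^ 2) ^ 0)); [intros; now rewrite sum_O|].
    apply Hk.
  - rewrite sum_Sn. change (plus ?x ?y) with (x + y).
    apply (is_RInt_ext_R (fun x => 1 * sum_n (fun k => cbin4n k * (sin x ^ 2) ^ k) N +
                                   1 * (cbin4n (S N) * (sin x ^ 2) ^ S N))).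
    { intros x. rewrite sum_Sn. change (plus ?x ?y) with (x + y). ring. }
    replace (PI / 2 * (sum_n (fun k => cbin4n k * cbin4 k) N + cbin4n (S N) * cbin4 (S N)))
      with (1 * (PI / 2 * sum_n (fun k => cbin4n k * cbin4 k) N)
            + 1 * (PI / 2 * (cbin4n (S N) * cbin4 (S N))))
      by ring.
    apply is_RInt_lincomb; [exact IH | apply Hk].
Qed.

Lemma is_RInt_lncos_complement :
  is_RInt (fun x => 4 * ln 2 - 2 * ln (2 + 2 * cos x)) 0 (PI / 2) (2 * PI * ln 2 - 2 * lncos_integral).
Proof.
  apply (is_RInt_ext_R (fun x => (4 * ln 2) * 1 + (-2) * ln (2 + 2 * cos x))); [intros; ring|].
  replace (2 * PI * ln 2 - 2 * lncos_integral) with ((4 * ln 2) * (PI / 2) + (-2) * lncos_integral) by field.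
  apply is_RInt_lincomb; [|apply is_RInt_lncos_integral].
  assert (H := is_RInt_const_R 1 0 (PI / 2)). rewrite Rminus_0_r, Rmult_1_r in H. exact H.
Qed.

Lemma PSeries_cbin4n_sin2 x : 0 < x < PI / 2 ->
  0 <= sin x ^ 2 < 1 /\ PSeries cbin4n (sin x ^ 2) = 4 * ln 2 - 2 * ln (2 + 2 * cos x).
Proof.
  intros Hx.
  assert (Hc : 0 < cos x) by (apply cos_gt_0; lra).
  assert (Hs : 1 - sin x ^ 2 = cos x ^ 2) by (generalize (sin2_cos2 x); unfold Rsqr; simpl; lra).
  assert (Hy : 0 <= sin x ^ 2 < 1) by (split; [apply pow2_ge_0 | nra]).
  split; [exact Hy|].
  rewrite PSeries_cbin4n, Hs, sqrt_pow2 by (try rewrite Rabs_pos_eq; lra). reflexivity.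
Qed.

Lemma sum_cbin4n_cbin4_bounds N :
  0 <= 4 * ln 2 - 4 * lncos_integral / PI - sum_n (fun k => cbin4n k * cbin4 k) N <= 2 * cbin4 N.
Proof.
  assert (HPI := PI_RGT_0).
  set (s := sum_n (fun k => cbin4n k * cbin4 k) N).
  assert (Hlow : PI / 2 * s <= 2 * PI * ln 2 - 2 * lncos_integral).
  { apply (is_RInt_le _ _ 0 (PI / 2) _ _ ltac:(lra) (is_RInt_sum_cbin4n_sin2 N) is_RInt_lncos_complement).
    intros x Hx. destruct (PSeries_cbin4n_sin2 x Hx) as [Hy <-].
    destruct (PSeries_cbin4n_tail _ N Hy). lra. }
  assert (Hup : 2 * PI * ln 2 - 2 * lncos_integral <= 1 * (PI / 2 * s) + 1 * ((PI / 2 - 0) * (2 * cbin4 N))).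
  { apply (is_RInt_le _ _ 0 (PI / 2) _ _ ltac:(lra) is_RInt_lncos_complement
             (is_RInt_lincomb _ _ _ _ 1 1 _ _ (is_RInt_sum_cbin4n_sin2 N)
                (is_RInt_const_R (2 * cbin4 N) _ _))).
    intros x Hx. destruct (PSeries_cbin4n_sin2 x Hx) as [Hy <-].
    destruct (PSeries_cbin4n_tail _ N Hy). lra. }
  assert (E : PI / 2 * (4 * ln 2 - 4 * lncos_integral / PI - s)
               = 2 * PI * ln 2 - 2 * lncos_integral - PI / 2 * s) by (field; lra).
  split; apply (Rmult_le_reg_l (PI / 2)); try lra; rewrite E; lra.
Qed.

Lemma is_lim_seq_sum_cbin4n_cbin4 :
  is_lim_seq (sum_n (fun k => cbin4n k * cbin4 k)) (4 * ln 2 - 8 * catalan / PI).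
Proof.
  assert (HPI := PI_RGT_0).
  replace (4 * ln 2 - 8 * catalan / PI) with (4 * ln 2 - 4 * lncos_integral / PI)
    by (rewrite catalan_lncos_integral; field; lra).
  apply (is_lim_seq_le_le (fun N => 4 * ln 2 - 4 * lncos_integral / PI - 2 * cbin4 N) _
                          (fun _ => 4 * ln 2 - 4 * lncos_integral / PI)).
  - intros N. destruct (sum_cbin4n_cbin4_bounds N). lra.
  - assert (H := is_lim_seq_minus' _ _ _ _ (is_lim_seq_const (4 * ln 2 - 4 * lncos_integral / PI))
                   (is_lim_seq_scal_l _ 2 _ is_lim_seq_cbin4)).
    rewrite Rmult_0_r, Rminus_0_r in H. exact H.
  - apply is_lim_seq_const.
Qed.

(** * The telescoping sum *)

Lemma term_cbin4 n :
  (1 / 16) ^ n * cbinom n ^ 2 * H2 n / (INR n + 1) = cbin4 n ^ 2 * H2 n / (INR n + 1).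
Proof.
  rewrite cbinom_cbin4, Rpow_mult_distr, <- pow_mult, Nat.mul_comm, pow_mult, <- Rmult_assoc,
    <- Rpow_mult_distr.
  replace (1 / 16 * 4 ^ 2) with 1 by field. rewrite pow1, Rmult_1_l. reflexivity.
Qed.

Lemma sum_term_telescope N :
  sum_n (fun n => (1 / 16) ^ n * cbinom n ^ 2 * H2 n / (INR n + 1)) N
  = 4 * (INR (S N) * cbin4 (S N) ^ 2 * H2 (S N)) - 4 * sum_n (fun k => cbin4n k * cbin4 k) (S N) :> R.
Proof.
  induction N as [|N IH].
  - rewrite sum_O, term_cbin4, sum_Sn, sum_O. change (plus ?x ?y) with (x + y).
    rewrite cbin4n_S. simpl. field.
  - rewrite sum_Sn, IH, term_cbin4, (sum_Sn _ (S N)). change (plus ?x ?y) with (x + y).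
    change (H2 (S (S N))) with (H2 (S N) + / INR (S (S N)) ^ 2).
    rewrite cbin4n_S, (cbin4_S (S N)), !S_INR.
    assert (0 <= INR N) by apply pos_INR.
    field. lra.
Qed.

Theorem mainTheorem7 :
  is_series (fun n : nat => (1/16)^n * (cbinom n)^2 * H2 n / (INR n + 1))
    (32 * catalan / PI + 2 * PI / 3 - 16 * ln 2).
Proof.
  apply (is_lim_seq_ext _ _ (Finite _) (fun N => eq_sym (sum_term_telescope N))).
  assert (HT := is_lim_seq_mult' _ _ _ _ is_lim_seq_Wallis_product is_lim_seq_H2).
  assert (HS := is_lim_seq_sum_cbin4n_cbin4).
  apply is_lim_seq_incr_1 in HT, HS.
  assert (L := is_lim_seq_minus' _ _ _ _ (is_lim_seq_scal_l _ 4 _ HT) (is_lim_seq_scal_l _ 4 _ HS)).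
  replace (32 * catalan / PI + 2 * PI / 3 - 16 * ln 2)
    with (4 * (/ PI * (PI ^ 2 / 6)) - 4 * (4 * ln 2 - 8 * catalan / PI))
    by (field; generalize PI_RGT_0; lra).
  exact L.
Qed.
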